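(* A standard quantum entity on a finite-dimensional complex Hilbert space $\mathcal{H}$ is state atomic: for states $p_{\bar c},p_{\bar d}$, if $O(e_E,p_{\bar c})\subseteq O(e_E,p_{\bar d})$ for every experiment $e_E$, then $p_{\bar c}=p_{\bar d}$.
   Context: A spectral family of $\mathcal{H}$ is a set $E=\{E_1,\dots,E_r\}$ of pairwise orthogonal nonzero orthogonal projections with $\sum_kE_k=I$. The standard quantum entity on $\mathcal{H}$ has states $p_{\bar c}$, one for each ray $\bar c$ (generated by a unit vector $c$), experiments $e_E$, one for each spectral family $E$, outcomes $x_{E_k}$, one for each orthogonal projection $E_k$, and outcome sets $O(e_E,p_{\bar c})=\{x_{E_k}:E_k\in E,\ E_kc\neq0\}$. *)

(* The Hilbert space H is C^n (row vectors 'rV[C]_n) with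
   C = R[i] the complex numbers over a real type R, and the standard inner
   product (spectral.dotmx).  Operators are n x n matrices acting on the
   right of row vectors (c *m P); for self-adjoint P this is the usual action. *)
From HB Require Import structures.
From mathcomp Require Import all_boot all_order all_algebra.
From mathcomp Require Import sesquilinear spectral.
From mathcomp Require Import reals.
From mathcomp.real_closed Require Import complex.
Set Implicit Arguments. Unset Strict Implicit. Unset Printing Implicit Defensive.
Import Order.TTheory GRing.Theory Num.Theory.
Local Open Scope ring_scope.
Local Open Scope sesquilinear_scope.

Section QE.
Variables (C : numClosedFieldType) (n : nat).

Definition orth_proj (P : 'M[C]_n) : Prop := P *m P = P /\ P ^t* = P.

(* spectral family: a finite set {E_1,...,E_r} of pairwise orthogonal nonzero
   orthogonal projections summing to the identity; given as a list of its
   elements, without repetition. *)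
Definition spectral_family (E : seq 'M[C]_n) : Prop :=
  uniq E /\
  (forall P, P \in E -> orth_proj P /\ P != 0) /\
  (forall P Q, P \in E -> Q \in E -> P != Q -> P *m Q = 0) /\
  \sum_(P <- E) P = 1%:M.

Definition unit_vector (c : 'rV[C]_n) : Prop := dotmx c c = 1.

(* the state p_{bar c} is the ray generated by c *)
Definition ray (c : 'rV[C]_n) : 'rV[C]_n -> Prop :=
  fun v => exists a : C, v = a *: c.

(* O(e_E, p_c) : outcomes x_{E_k} (identified with the projections E_k)
   with E_k c <> 0 *)
Definition outcome_set (E : seq 'M[C]_n) (c : 'rV[C]_n) : 'M[C]_n -> Prop :=
  fun P => P \in E /\ c *m P != 0.

End QE.

(* For a unit vector d, the projection P onto the line of d and its
   complement 1 - P form a spectral family (once 1 - P is nonzero).  The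
   outcome 1 - P is impossible in the state of d, so by hypothesis it is
   impossible in the state of c as well: c (1 - P) = 0, i.e. c = c P is a
   multiple of d, nonzero because c is a unit vector. *)
From HB Require Import structures.
From mathcomp Require Import all_boot all_order all_algebra.
From mathcomp Require Import sesquilinear spectral.
From mathcomp Require Import reals.
From mathcomp.real_closed Require Import complex.
From Stdlib Require Import FunctionalExtensionality PropExtensionality.
Set Implicit Arguments. Unset Strict Implicit. Unset Printing Implicit Defensive.
Import Order.TTheory GRing.Theory Num.Theory.
Local Open Scope ring_scope.
Local Open Scope sesquilinear_scope.

Section OrthProjCompl.
Variables (C : numClosedFieldType) (n : nat).
Implicit Types P : 'M[C]_n.

Lemma trmxC_mul m k p (A : 'M[C]_(m, k)) (B : 'M[C]_(k, p)) :
  (A *m B) ^t* = B ^t* *m A ^t*.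
Proof. by rewrite trmx_mul map_mxM. Qed.

Lemma orth_proj_mul_compl P : orth_proj P -> P *m (1%:M - P) = 0.
Proof. by case=> PP _; rewrite mulmxBr mulmx1 PP subrr. Qed.

Lemma orth_proj_compl_mul P : orth_proj P -> (1%:M - P) *m P = 0.
Proof. by case=> PP _; rewrite mulmxBl mul1mx PP subrr. Qed.

Lemma orth_proj_compl P : orth_proj P -> orth_proj (1%:M - P).
Proof.
move=> projP; split.
  by rewrite mulmxBl mul1mx orth_proj_mul_compl // subr0.
by case: projP => _ Pt; rewrite linearB /= map_mxB trmx1 map_mx1 Pt.
Qed.

Lemma spectral_family_compl P :
  orth_proj P -> P != 0 -> 1%:M - P != 0 -> spectral_family [:: P; 1%:M - P].
Proof.
move=> projP P0 Q0; have [PP _] := projP.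
have PneQ : P != 1%:M - P.
  by apply: contraNneq P0 => PQ; rewrite -PP {2}PQ orth_proj_mul_compl.
split; first by rewrite /= inE PneQ.
split.
  by move=> X; rewrite !inE => /orP[] /eqP->; split=> //; exact: orth_proj_compl.
split; last by rewrite !big_cons big_nil addr0 addrC subrK.
move=> X Y; rewrite !inE => /orP[] /eqP-> /orP[] /eqP->; rewrite ?eqxx // => _.
  exact: orth_proj_mul_compl.
exact: orth_proj_compl_mul.
Qed.

End OrthProjCompl.

Section LineProj.
Variables (C : numClosedFieldType) (n : nat).
Implicit Types c d : 'rV[C]_n.

Definition line_proj d : 'M[C]_n := d ^t* *m d.

Lemma unit_vector_neq0 d : unit_vector d -> d != 0.
Proof.
move=> ud; apply/eqP => d0; move: ud.
by rewrite /unit_vector d0 dotmxE mul0mx mxE => /esym/eqP; rewrite oner_eq0.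
Qed.

Lemma unit_vector_mul_trmxC d : unit_vector d -> d *m d ^t* = 1%:M.
Proof. by move=> ud; rewrite [LHS]mx11_scalar -dotmxE ud. Qed.

Lemma mul_line_proj c d : c *m line_proj d = (c *m d ^t*) 0 0 *: d.
Proof. by rewrite mulmxA {1}(mx11_scalar (c *m d ^t*)) mul_scalar_mx. Qed.

Lemma line_proj_id d : unit_vector d -> d *m line_proj d = d.
Proof. by move=> ud; rewrite mulmxA unit_vector_mul_trmxC // mul1mx. Qed.

Lemma line_proj_neq0 d : unit_vector d -> line_proj d != 0.
Proof.
move=> ud; apply: contraNneq (unit_vector_neq0 ud) => P0.
by rewrite -(line_proj_id ud) P0 mulmx0.
Qed.

Lemma orth_proj_line d : unit_vector d -> orth_proj (line_proj d).
Proof.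
move=> ud; split; last by rewrite trmxC_mul trmxCK.
by rewrite {1}/line_proj -mulmxA line_proj_id.
Qed.

Lemma ray_scale (a : C) d : a != 0 -> ray (a *: d) = ray d.
Proof.
move=> a0; apply: functional_extensionality => v.
apply: propositional_extensionality; split=> -[b ->].
  by exists (b * a); rewrite scalerA.
by exists (b / a); rewrite scalerA mulfVK.
Qed.

End LineProj.

Theorem mainTheorem16 (R : realType) (n : nat) (c d : 'rV[R[i]]_n) :
  unit_vector c -> unit_vector d ->
  (forall E : seq 'M[R[i]]_n, spectral_family E ->
     forall P, outcome_set E c P -> outcome_set E d P) ->
  ray c = ray d.
Proof.
move=> uc ud incl; set P := line_proj d.
have cQ : c *m (1%:M - P) = 0.
  apply/eqP; apply: contraT => cQ.
  have Q0 : 1%:M - P != 0 by apply: contraNneq cQ => ->; rewrite mulmx0.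
  have famE := spectral_family_compl (orth_proj_line ud) (line_proj_neq0 ud) Q0.
  have [_] := incl _ famE _ (conj (mem_last _ _) cQ).
  by rewrite mulmxBr mulmx1 line_proj_id // subrr eqxx.
set a := (c *m d ^t*) 0 0.
have c_def : c = a *: d.
  by rewrite -mul_line_proj -[c in LHS]mulmx1 -(subrK P 1%:M) mulmxDr cQ add0r.
rewrite c_def ray_scale //.
by apply: contraNneq (unit_vector_neq0 uc) => a0; rewrite c_def a0 scale0r.
Qed.
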